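(* Let $\kappa$ be a regular uncountable cardinal with $\kappa^{<\kappa}=\kappa$ and $\gamma^\omega<\kappa$ for all $\gamma<\kappa$, and let $I^i$, $I^i_\alpha$ be as in the context. For every $i<\kappa$, every limit ordinal $\delta<\kappa$ and every $\nu\in I^i$ there is $\beta<\delta$ such that for every $\sigma\in I^i_\delta$ with $\sigma>\nu$ there is $\sigma'\in I^i_\beta$ with $\sigma\ge\sigma'\ge\nu$.
   Context: $I^0$: order $\kappa\times\mathbb Q$ lexicographically; $I^0$ is the set of $f:\omega\to\kappa\times\mathbb Q$, $f(n)=(f_1(n),f_2(n))$, with $\{n\mid f_1(n)\ne0\}$ finite, ordered by comparing at the least $n$ where they differ. Construct linear orders $I^0\subseteq I^1\subseteq\dots\subseteq I^i\subseteq\dots$ ($i<\kappa$): given $I^i$, for each $\nu\in I^i$ add a new element $\nu^{i+1}$ realizing $tp_{bs}(\nu,I^i\setminus\{\nu\},I^i)\cup\{x<\nu\}$, i.e. $\nu^{i+1}<\nu$ and for every $\tau\in I^i\setminus\{\nu\}$, $\tau<\nu^{i+1}$ iff $\tau<\nu$ (for distinct $\nu,\mu$, $\nu^{i+1}<\mu^{i+1}$ iff $\nu<\mu$); $I^{i+1}=I^i\cup\{\nu^{i+1}\mid\nu\in I^i\}$; at limits $I^i=\bigcup_{j<i}I^j$. Representations: $I^0_\alpha=\{\nu\in I^0\mid \nu_1(n)<\alpha\text{ for all }n<\omega\}$; $I^{i+1}_\alpha=I^i_\alpha\cup\{\nu^{i+1}\mid\nu\in I^i_\alpha\}$; for limit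 $i$, $I^i_\alpha=\bigcup_{j<i}I^j_\alpha$. *)

From mathcomp Require Import all_boot all_order all_algebra.
Import Order.TTheory GRing.Theory Num.Theory.

(* The cardinal kappa is represented by a type K with a strict well-order ltK
   of order type kappa (K = the set of ordinals < kappa); k0 is its least
   element (the ordinal 0). *)
Section Kappa.
Variables (K : Type) (ltK : K -> K -> Prop) (k0 : K).

Definition strict_well_order : Prop :=
  [/\ (forall x, ~ ltK x x),
      (forall x y z, ltK x y -> ltK y z -> ltK x z),
      (forall x y, ltK x y \/ x = y \/ ltK y x)
    & well_founded ltK].

Definition is_least : Prop := forall x, ~ ltK x k0.

(* |S| < kappa : there is no injection of K into S *)
Definition small (S : K -> Prop) : Prop :=
  ~ exists f : K -> K, (forall k, S (f k)) /\ (forall a b, f a = f b -> a = b).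

(* kappa is a cardinal (initial ordinal): every proper initial segment is small *)
Definition is_cardinal : Prop := forall x, small (fun y => ltK y x).

Definition uncountable : Prop :=
  ~ exists f : K -> nat, forall a b, f a = f b -> a = b.

Definition regular : Prop :=
  forall S : K -> Prop, small S -> exists b, forall s, S s -> ltK s b.

(* kappa^{<kappa} = kappa: for every gamma < kappa, kappa^gamma <= kappa,
   i.e. functions gamma -> K (modulo equality on gamma) inject into K *)
Definition pow_lt_kappa : Prop :=
  forall gamma : K, exists G : (K -> K) -> K,
    forall g h, G g = G h -> forall y, ltK y gamma -> g y = h y.

Definition omega_pow_small : Prop :=
  forall gamma : K, ~ exists F : K -> nat -> K,
    (forall k n, ltK (F k n) gamma) /\
    (forall a b, (forall n, F a n = F b n) -> a = b).

Definition is_limit (d : K) : Prop :=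
  d <> k0 /\ forall x, ltK x d -> exists y, ltK x y /\ ltK y d.

Definition lexKQ (x y : K * rat) : Prop :=
  ltK x.1 y.1 \/ (x.1 = y.1 /\ (x.2 < y.2)%R).

Definition fin_supp (f : nat -> K * rat) : Prop :=
  exists N, forall n, (N <= n)%N -> (f n).1 = k0.

Definition baselt (f g : nat -> K * rat) : Prop :=
  exists n, (forall m, (m < n)%N -> f m = g m) /\ lexKQ (f n) (g n).

(* An element of I^i is nu^{j_1+1 ... j_k+1}: a base nu in I^0 to which the
   successive operations "add nu^{j+1}" were applied at stages
   j_1 + 1, ..., j_k + 1 with j_1 < ... < j_k < i. *)
Record elt := Elt { base : nat -> K * rat; stages : list K }.

Fixpoint incr (l : list K) : Prop :=
  match l with
  | a :: ((b :: _) as l') => ltK a b /\ incr l'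
  | _ => True
  end.

Fixpoint all_below (i : K) (l : list K) : Prop :=
  match l with
  | [::] => True
  | a :: l' => ltK a i /\ all_below i l'
  end.

(* order between the stage lists of two elements with the same base:
   nu^{j+1} lies immediately below nu (below nu, above everything of I^j
   below nu), so the list with the smaller entry at the first difference is
   smaller, and a proper extension of a list is smaller than the list *)
Fixpoint stlt (l m : list K) : Prop :=
  match l, m with
  | [::], _ => False
  | _ :: _, [::] => True
  | a :: l', b :: m' => ltK a b \/ (a = b /\ stlt l' m')
  end.

Definition eltlt (x y : elt) : Prop :=
  baselt (base x) (base y) \/
  ((forall n, base x n = base y n) /\ stlt (stages x) (stages y)).

Definition elt_eq (x y : elt) : Prop :=
  (forall n, base x n = base y n) /\ stages x = stages y.

Definition eltle (x y : elt) : Prop := eltlt x y \/ elt_eq x y.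

Definition inI (i : K) (x : elt) : Prop :=
  [/\ fin_supp (base x), incr (stages x) & all_below i (stages x)].

Definition inIa (i alpha : K) (x : elt) : Prop :=
  inI i x /\ forall n, ltK (base x n).1 alpha.

End Kappa.

From mathcomp Require Import all_boot all_order all_algebra.
From mathcomp Require Import lra.
From Stdlib Require Import Classical.
Import Order.TTheory GRing.Theory Num.Theory.

Set Implicit Arguments.
Unset Strict Implicit.

(* The base of nu has finitely many non-zero first coordinates, so, delta
   being a limit, those below delta are bounded by some beta < delta.  If
   sigma > nu lies in I^i_delta, either nu and sigma share their base, and
   then nu itself lies in I^i_beta, or their bases first differ at some m;
   then truncating nu after m and raising the rational part of its m-th
   entry slightly gives an element of I^0_beta between nu and sigma. *)

Arguments base {K}.
Arguments stages {K}.
Arguments Elt {K}.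
Arguments lexKQ {K}.
Arguments strict_well_order {K}.
Arguments is_least {K}.
Arguments is_limit {K}.
Arguments fin_supp {K}.
Arguments baselt {K}.

Section LimitBounds.

Variables (K : Type) (ltK : K -> K -> Prop) (k0 : K).
Hypothesis Hwo : strict_well_order ltK.

Lemma limit_gt_least delta :
  is_least ltK k0 -> is_limit ltK k0 delta -> ltK k0 delta.
Proof.
case: Hwo => _ _ Htri _ Hk0 [Hd0 _].
by case: (Htri k0 delta) => [//|[/esym //|/Hk0]].
Qed.

Lemma limit_above2 delta a b : is_limit ltK k0 delta ->
  ltK a delta -> ltK b delta -> exists c, [/\ ltK c delta, ltK a c & ltK b c].
Proof.
case: Hwo => _ Htr Htri _ [_ Hlim] Had Hbd.
have [m [Hmd Ham Hbm]] : exists m, [/\ ltK m delta,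
    ltK a m \/ a = m & ltK b m \/ b = m].
  case: (Htri a b) => [Hab|[<-|Hba]].
  - by exists b; split; [|left|right].
  - by exists a; split => //; right.
  - by exists a; split; [|right|left].
have [c [Hmc Hcd]] := Hlim m Hmd.
have below_c x : ltK x m \/ x = m -> ltK x c.
  by case=> [Hxm|->]; [exact: Htr Hxm Hmc|].
by exists c; split; [|exact: below_c|exact: below_c].
Qed.

Lemma limit_bound_prefix delta (f : nat -> K) N :
  is_limit ltK k0 delta -> ltK k0 delta ->
  exists b, [/\ ltK b delta, ltK k0 b &
    forall k, (k < N)%N -> ltK (f k) delta -> ltK (f k) b].
Proof.
case: Hwo => _ Htr _ _ Hdelta Hk0d.
elim: N => [|N [b [Hbd Hk0b Hb]]].
  have [c [Hcd Hk0c _]] := limit_above2 Hdelta Hk0d Hk0d.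
  by exists c; split.
have [HfN|HfN] := classic (ltK (f N) delta); last first.
  exists b; split => // k; rewrite ltnS leq_eqVlt.
  by case/orP => [/eqP -> /HfN|/Hb].
have [c [Hcd Hbc HfNc]] := limit_above2 Hdelta Hbd HfN.
exists c; split => [//||k]; first exact: Htr Hk0b Hbc.
rewrite ltnS leq_eqVlt; case/orP => [/eqP -> //|Hk /(Hb k Hk) Hfb].
exact: Htr Hfb Hbc.
Qed.

Lemma fin_supp_limit_bound delta (f : nat -> K * rat) :
  is_least ltK k0 -> is_limit ltK k0 delta -> fin_supp k0 f ->
  exists beta, [/\ ltK beta delta, ltK k0 beta &
    forall n, ltK (f n).1 delta -> ltK (f n).1 beta].
Proof.
move=> Hk0 Hdelta [N HN].
have Hk0d := limit_gt_least Hk0 Hdelta.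
have [b [Hbd Hk0b Hb]] := limit_bound_prefix (fun n => (f n).1) N Hdelta Hk0d.
by exists b; split => // n; case: (ltnP n N) => [/Hb|/HN ->].
Qed.

End LimitBounds.

Lemma baselt_between (K : Type) (ltK : K -> K -> Prop) (k0 : K)
  (f g : nat -> K * rat) : baselt ltK f g ->
  exists h, [/\ fin_supp k0 h, baselt ltK f h, baselt ltK h g &
    forall n, (h n).1 = k0 \/
      ((h n).1 = (f n).1 /\ (ltK (f n).1 (g n).1 \/ (f n).1 = (g n).1))].
Proof.
move=> [m [Hfg Hm]].
have [q [Hfq Hqg]] : exists q : rat,
    ((f m).2 < q)%R /\ lexKQ ltK ((f m).1, q) (g m).
  case: Hm => [Hlt|[Heq Hlt]].
    by exists ((f m).2 + 1)%R; split; [lra|left].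
  by exists (((f m).2 + (g m).2) / 2)%R; split; [lra|right; split => //=; lra].
pose h n := if (n < m)%N then f n else if n == m then ((f m).1, q) else (k0, 0%R).
have hm : h m = ((f m).1, q) by rewrite /h ltnn eqxx.
have hlt n : (n < m)%N -> h n = f n by rewrite /h => ->.
exists h; split.
- exists m.+1 => n Hn; rewrite /h ltnNge ltnW //= gtn_eqF //.
- exists m; split => [n Hn|]; first by rewrite hlt.
  by rewrite hm; right.
- exists m; split => [n Hn|]; first by rewrite hlt // Hfg.
  by rewrite hm.
- move=> n; rewrite /h; case: ltnP => [Hn|_].
    by right; split => //; right; rewrite Hfg.
  case: eqP => [-> /=|_]; last by left.
  by right; split => //; case: Hm => [|[]]; [left|right].
Qed.

Theorem mainTheorem10 (K : Type) (ltK : K -> K -> Prop) (k0 : K)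
  (Hwo : @strict_well_order K ltK) (Hk0 : @is_least K ltK k0)
  (Hcard : @is_cardinal K ltK) (Hunc : @uncountable K) (Hreg : @regular K ltK)
  (Hpow : @pow_lt_kappa K ltK) (Homega : @omega_pow_small K ltK) :
  forall (i delta : K), @is_limit K ltK k0 delta ->
  forall nu : elt K, @inI K ltK k0 i nu ->
  exists beta : K, ltK beta delta /\
    forall sigma : elt K, @inIa K ltK k0 i delta sigma -> @eltlt K ltK nu sigma ->
    exists sigma' : elt K, @inIa K ltK k0 i beta sigma' /\
      @eltle K ltK sigma' sigma /\ @eltle K ltK nu sigma'.
Proof.
move=> i delta Hdelta nu Hnu.
have [Hsupp _ _] := Hnu.
have [beta [Hbd Hk0b Hbeta]] := fin_supp_limit_bound Hwo Hk0 Hdelta Hsupp.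
exists beta; split => // sigma [_ Hsd] Hlt.
case: (Hlt) => [Hbase|[Heq _]].
- have [h [Hh Hnh Hhs Hh1]] := baselt_between k0 Hbase.
  exists (Elt h [::]); split; last by split; left; left.
  split => [//|n]; case: (Hh1 n) => [-> //|[-> Hle]].
  apply: Hbeta; case: Hle => [Hlt'|->]; last exact: Hsd.
  by case: Hwo => _ Htr _ _; apply: Htr Hlt' (Hsd n).
- exists nu; split; last by split; [left|right].
  by split => // n; apply: Hbeta; rewrite Heq.
Qed.
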